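(* Let $X,h,\Gamma^\pm,\Phi^t_{\mathcal X_h}$ be as below. Let $\mathcal U^\pm=\tilde{\mathcal U}^\pm\times\mathbb R$ be conical neighborhoods of $\Gamma^\pm$ with $\mathcal U^+$ positively invariant and $\mathcal U^-$ negatively invariant under the flow, $\delta>0$, and $k,\mathtt m\in C^\infty(T^*\mathbb T\setminus\{\xi=0\})$ positively homogeneous of degree one with $k=\pm|\xi|$ on $\Gamma^\pm$, $\{h,k\}\ge\delta|\xi|$ on $\mathcal U^+\cup\mathcal U^-$, $\mathtt m=\{h,k\}$ on $\mathcal U^+\cup\mathcal U^-$ and $\mathtt m\ge\frac\delta2|\xi|$ everywhere. For $z\in B(\Gamma^\pm):=T^*\mathbb T\setminus\Gamma^\mp$ (with $\xi\ne0$) define $$\ell^\pm(z):=\lim_{t\to\pm\infty}\Big[k(\Phi^t_{\mathcal X_h}(z))-\int_0^t\mathtt m(\Phi^s_{\mathcal X_h}(z))\,ds\Big].$$ Then (i) $\ell^\pm$ is well defined on $B(\Gamma^\pm)$, smooth, positively homogeneous of degree one, and $\ell^\pm=k$ on $\Gamma^\pm$; (ii) $\{h,\ell^\pm\}(x,\xi)\ge\frac\delta2|\xi|$ for all $(x,\xi)\in B(\Gamma^\pm)$ with $\xi\neq0$.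
   Context: $\mathbb T:=\mathbb R/2\pi\mathbb Z$; $X\in C^\infty(\mathbb T;\mathbb R)$ has at least one zero and no degenerate zero; $h(x,\xi)=\xi X(x)$ on $T^*\mathbb T\simeq\mathbb T\times\mathbb R$, with Hamiltonian vector field $\mathcal X_h=(X(x),-\xi X'(x))$ and complete flow $\Phi^t_{\mathcal X_h}$. $K^+:=\{X=0,X'<0\}$, $K^-:=\{X=0,X'>0\}$, $\Gamma^\pm=K^\pm\times\mathbb R$. Poisson bracket $\{h,f\}:=\partial_\xi h\partial_xf-\partial_xh\partial_\xi f$. Positive homogeneity of degree $\rho$: $f(x,\lambda\xi)=\lambda^\rho f(x,\xi)$ for $\lambda>0$. *)

From Stdlib Require Import Reals Lra.
From Coquelicot Require Import Coquelicot.
Open Scope R_scope.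

(* The cotangent bundle T^*T is represented by its lift R x R, with the
   base variable x taken 2*PI-periodically. *)

Definition dx (f : R -> R -> R) (x xi : R) : R := Derive (fun y => f y xi) x.
Definition dxi (f : R -> R -> R) (x xi : R) : R := Derive (fun e => f x e) xi.

Definition cont2_on (U : R -> R -> Prop) (f : R -> R -> R) : Prop :=
  forall x xi, U x xi -> continuous (fun p : R * R => f (fst p) (snd p)) (x, xi).

Fixpoint Cn_on (n : nat) (U : R -> R -> Prop) (f : R -> R -> R) : Prop :=
  match n with
  | O => cont2_on U f
  | S n' => cont2_on U f /\
      (forall x xi, U x xi -> ex_derive (fun y => f y xi) x /\ ex_derive (fun e => f x e) xi) /\
      Cn_on n' U (dx f) /\ Cn_on n' U (dxi f)
  end.

Definition smooth_on (U : R -> R -> Prop) (f : R -> R -> R) : Prop :=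
  forall n, Cn_on n U f.

Definition smooth1 (X : R -> R) : Prop := forall n x, ex_derive_n X n x.

Definition periodic1 (X : R -> R) : Prop := forall x, X (x + 2 * PI) = X x.
Definition periodic2 (f : R -> R -> R) : Prop := forall x xi, f (x + 2 * PI) xi = f x xi.

Definition nonzero_xi (x xi : R) : Prop := xi <> 0.

Definition pos_homog1 (f : R -> R -> R) : Prop :=
  forall x xi lam, 0 < lam -> xi <> 0 -> f x (lam * xi) = lam * f x xi.

(* K^+ (b = true) and K^- (b = false) *)
Definition Kset (X : R -> R) (b : bool) (x : R) : Prop :=
  X x = 0 /\ (if b then Derive X x < 0 else 0 < Derive X x).

Definition sgn (b : bool) : R := if b then 1 else -1.

Definition Bset (X : R -> R) (b : bool) (x xi : R) : Prop :=
  xi <> 0 /\ ~ Kset X (negb b) x.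

(* Poisson bracket {h, f} with h(x,ξ) = ξ X(x) *)
Definition PB (X : R -> R) (f : R -> R -> R) (x xi : R) : R :=
  X x * dx f x xi - xi * Derive X x * dxi f x xi.

Definition limpt (b : bool) : Rbar := if b then p_infty else m_infty.

Definition is_ham_flow (X : R -> R) (Phi : R -> R * R -> R * R) : Prop :=
  (forall z, Phi 0 z = z) /\
  (forall z t,
     is_derive (fun s => fst (Phi s z)) t (X (fst (Phi t z))) /\
     is_derive (fun s => snd (Phi s z)) t (- snd (Phi t z) * Derive X (fst (Phi t z)))).

Definition ell_approx (k m : R -> R -> R) (Phi : R -> R * R -> R * R) (z : R * R) (t : R) : R :=
  k (fst (Phi t z)) (snd (Phi t z)) - RInt (fun s => m (fst (Phi s z)) (snd (Phi s z))) 0 t.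

From Stdlib Require Import Reals Lra FunctionalExtensionality Classical.
From Coquelicot Require Import Coquelicot.
Open Scope R_scope.

(* Along the flow [xi X(x)] is conserved, [xi] keeps its sign, and a homogeneous [f] evolves by
   [d/dt f = {h, f}]; hence [d/dt ell_approx = {h, k} - m], which vanishes as soon as the
   trajectory stays in [U^+].  On [U^+] this gives [ell^+ = k].  At a point with [X(x) <> 0] the
   base trajectory moves monotonically to the first zero of [X] in the direction of [X(x)];
   this zero lies in [K^+], so the trajectory ends up in [U^+].  Conservation of [xi X(x)] then
   turns the time integral of [m] into a space integral, and [ell^+] takes the closed form
   [ell_profile], smooth in [x] and homogeneous in [xi], with [{h, ell^+} = m].  Near every point of
   [B(Gamma^+)], [ell^+] therefore agrees with [k] or with this closed form, which gives its
   smoothness, homogeneity and [{h, ell^+} = m >= delta/2 |xi|].  The case of [Gamma^-] follows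
   by reversing time, which replaces [X] by [-X] and [k] by [-k]. *)

(** * Regularity in one and two variables *)

Fixpoint Cn_interval (n : nat) (a b : R) (f : R -> R) : Prop :=
  (forall x, a < x < b -> continuous f x) /\
  match n with
  | O => True
  | S n' => (forall x, a < x < b -> ex_derive f x) /\ Cn_interval n' a b (Derive f)
  end.

Lemma interval_locally a b x : a < x < b -> locally x (fun y => a < y < b).
Proof. exact (open_and _ _ (open_gt a) (open_lt b) x). Qed.

Lemma Cn_interval_pred n a b f : Cn_interval (S n) a b f -> Cn_interval n a b f.
Proof.
  revert f; induction n as [|n IH]; intros f [Hc [Hd Hs]].
  - now split.
  - split; [exact Hc|]. split; [exact Hd|]. exact (IH _ Hs).
Qed.

Lemma Cn_interval_continuous n a b f x : Cn_interval n a b f -> a < x < b -> continuous f x.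
Proof. destruct n; intros [H _]; auto. Qed.

Lemma Cn_interval_ext n a b f g :
  (forall x, a < x < b -> f x = g x) -> Cn_interval n a b f -> Cn_interval n a b g.
Proof.
  assert (Hloc : forall (f g : R -> R) x, (forall x, a < x < b -> f x = g x) -> a < x < b ->
            locally x (fun y => f y = g y)).
  { intros f' g' x Hfg Hx. generalize (interval_locally a b x Hx). apply filter_imp. auto. }
  revert f g; induction n as [|n IH]; intros f g Hfg [Hc Hr].
  - split; auto. intros x Hx. apply continuous_ext_loc with f; auto.
  - destruct Hr as [Hd Hs]. split; [|split].
    + intros x Hx. apply continuous_ext_loc with f; auto.
    + intros x Hx. apply ex_derive_ext_loc with f; auto.
    + apply IH with (Derive f); auto. intros x Hx. apply Derive_ext_loc; auto.
Qed.

Lemma Cn_interval_subinterval n a b a' b' f :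
  a <= a' -> b' <= b -> Cn_interval n a b f -> Cn_interval n a' b' f.
Proof.
  intros Ha Hb. revert f; induction n as [|n IH]; intros f [Hc Hr].
  - split; auto. intros x Hx; apply Hc; lra.
  - destruct Hr as [Hd Hs]. split; [|split]; auto.
    + intros x Hx; apply Hc; lra.
    + intros x Hx; apply Hd; lra.
Qed.

Lemma Cn_interval_const n a b c : Cn_interval n a b (fun _ => c).
Proof.
  revert c; induction n as [|n IH]; intros c.
  - split; auto. intros; apply continuous_const.
  - split; [|split].
    + intros; apply continuous_const.
    + intros; apply ex_derive_const.
    + apply Cn_interval_ext with (fun _ => 0); auto. intros x _. now rewrite Derive_const.
Qed.

Lemma Cn_interval_plus n a b f g :
  Cn_interval n a b f -> Cn_interval n a b g -> Cn_interval n a b (fun x => f x + g x).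
Proof.
  revert f g; induction n as [|n IH]; intros f g [Hcf Hf] [Hcg Hg].
  - split; auto. intros x Hx. apply (continuous_plus f g); auto.
  - destruct Hf as [Hdf Hsf], Hg as [Hdg Hsg]. split; [|split].
    + intros x Hx. apply (continuous_plus f g); auto.
    + intros x Hx. apply (ex_derive_plus f g); auto.
    + apply Cn_interval_ext with (fun x => Derive f x + Derive g x); auto.
      intros x Hx. rewrite Derive_plus; auto.
Qed.

Lemma Cn_interval_opp n a b f : Cn_interval n a b f -> Cn_interval n a b (fun x => - f x).
Proof.
  revert f; induction n as [|n IH]; intros f [Hcf Hf].
  - split; auto. intros x Hx. apply (continuous_opp f); auto.
  - destruct Hf as [Hdf Hsf]. split; [|split].
    + intros x Hx. apply (continuous_opp f); auto.
    + intros x Hx. apply (ex_derive_opp f); auto.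
    + apply Cn_interval_ext with (fun x => - Derive f x); auto.
      intros x Hx. now rewrite Derive_opp.
Qed.

Lemma Cn_interval_mult n a b f g :
  Cn_interval n a b f -> Cn_interval n a b g -> Cn_interval n a b (fun x => f x * g x).
Proof.
  revert f g; induction n as [|n IH]; intros f g Hf Hg.
  - destruct Hf as [Hcf _], Hg as [Hcg _].
    split; auto. intros x Hx. apply (continuous_mult f g); auto.
  - pose proof (Cn_interval_pred _ _ _ _ Hf) as Hf'. pose proof (Cn_interval_pred _ _ _ _ Hg) as Hg'.
    destruct Hf as [Hcf [Hdf Hsf]], Hg as [Hcg [Hdg Hsg]]. split; [|split].
    + intros x Hx. apply (continuous_mult f g); auto.
    + intros x Hx. apply (ex_derive_mult f g); auto.
    + apply Cn_interval_ext with (fun x => Derive f x * g x + f x * Derive g x).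
      { intros x Hx. rewrite Derive_mult; auto. }
      apply Cn_interval_plus; apply IH; auto.
Qed.

Lemma Cn_interval_inv n a b f :
  (forall x, a < x < b -> f x <> 0) -> Cn_interval n a b f -> Cn_interval n a b (fun x => / f x).
Proof.
  revert f; induction n as [|n IH]; intros f Hnz Hf.
  - destruct Hf as [Hcf _]. split; auto. intros x Hx.
    apply continuity_pt_filterlim, continuity_pt_inv; [apply continuity_pt_filterlim, Hcf|]; auto.
  - pose proof (Cn_interval_pred _ _ _ _ Hf) as Hf'.
    destruct Hf as [Hcf [Hdf Hsf]]. split; [|split].
    + intros x Hx. apply (ex_derive_continuous (fun y => / f y)), ex_derive_inv; auto.
    + intros x Hx. apply ex_derive_inv; auto.
    + apply Cn_interval_ext with (fun x => - Derive f x * (/ f x * / f x)).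
      { intros x Hx. rewrite Derive_inv; auto. field. auto. }
      apply Cn_interval_mult; [apply Cn_interval_opp; auto|].
      apply Cn_interval_mult; apply IH; auto.
Qed.

Lemma is_derive_RInt_lower (g : R -> R) a b y0 x : a < x < b -> a < y0 < b ->
  (forall u, a < u < b -> continuous g u) -> is_derive (fun v => RInt g v y0) x (- g x).
Proof.
  intros Hx Hy Hg. apply (is_derive_RInt' g (fun v => RInt g v y0) x y0); auto.
  generalize (interval_locally a b x Hx). apply filter_imp. intros u Hu.
  apply (RInt_correct g), (ex_RInt_continuous g). intros w Hw. apply Hg.
  destruct (Rle_dec u y0).
  - rewrite Rmin_left in Hw by lra; rewrite Rmax_right in Hw by lra; lra.
  - rewrite Rmin_right in Hw by lra; rewrite Rmax_left in Hw by lra; lra.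
Qed.

Lemma Cn_interval_RInt n a b g y0 : a < y0 < b -> Cn_interval n a b g ->
  Cn_interval (S n) a b (fun x => RInt g x y0).
Proof.
  intros Hy Hg.
  assert (Hd : forall x, a < x < b -> is_derive (fun x => RInt g x y0) x (- g x)).
  { intros x Hx. apply (is_derive_RInt_lower g a b); auto.
    intros u Hu. exact (Cn_interval_continuous n a b g u Hg Hu). }
  split; [|split].
  - intros x Hx. apply (ex_derive_continuous (fun x => RInt g x y0)). eexists; apply Hd; auto.
  - intros x Hx. eexists; apply Hd; auto.
  - apply Cn_interval_ext with (fun x => - g x).
    { intros x Hx. symmetry. apply is_derive_unique, Hd; auto. }
    apply Cn_interval_opp; auto.
Qed.

Lemma Cn_interval_smooth1 n a b f : smooth1 f -> Cn_interval n a b f.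
Proof.
  revert f; induction n as [|n IH]; intros f Hf.
  - split; auto. intros x _. apply (ex_derive_continuous f), (Hf 1%nat x).
  - split; [|split].
    + intros x _. apply (ex_derive_continuous f), (Hf 1%nat x).
    + intros x _. apply (Hf 1%nat x).
    + apply IH. intros [|j] x; [exact I|]. simpl.
      apply ex_derive_ext with (Derive_n f (S j)); [|apply (Hf (S (S j)) x)].
      intros t. change (Derive_n f (S j) t = Derive_n (Derive_n f 1) j t).
      rewrite (Derive_n_comp f j 1 t). now rewrite Nat.add_1_r.
Qed.

Lemma Cn_interval_slice n a b (m : R -> R -> R) s :
  s <> 0 -> Cn_on n nonzero_xi m -> Cn_interval n a b (fun x => m x s).
Proof.
  intros Hs. revert m; induction n as [|n IH]; intros m Hm.
  - split; auto. intros x _.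
    apply (continuous_comp_2 (fun x => x) (fun _ => s) (fun u v => m u v));
      [apply continuous_id | apply continuous_const | apply Hm, Hs].
  - destruct Hm as [Hc [Hd [Hx _]]]. split; [|split].
    + intros x _.
      apply (continuous_comp_2 (fun x => x) (fun _ => s) (fun u v => m u v));
        [apply continuous_id | apply continuous_const | apply Hc, Hs].
    + intros x _. apply (Hd x s Hs).
    + exact (IH (dx m) Hx).
Qed.

Definition open_2d (V : R -> R -> Prop) : Prop := forall x xi, V x xi -> locally_2d V x xi.

Lemma open_2d_prod (A B : R -> Prop) : open A -> open B -> open_2d (fun x xi => A x /\ B xi).
Proof.
  intros HA HB x xi [Hx Hxi].
  destruct (HA x Hx) as [r1 H1], (HB xi Hxi) as [r2 H2].
  assert (Hr : 0 < Rmin r1 r2) by (apply Rmin_pos; apply cond_pos).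
  exists (mkposreal _ Hr). simpl. intros u v Hu Hv.
  pose proof (Rmin_l r1 r2); pose proof (Rmin_r r1 r2).
  split; [apply H1; change (Rabs (u - x) < r1) | apply H2; change (Rabs (v - xi) < r2)]; lra.
Qed.

Lemma open_same_sign p : open (fun e => 0 < e * p).
Proof.
  intros x Hx. assert (Hx0 : 0 < Rabs x) by (apply Rabs_pos_lt; intros ->; lra).
  exists (mkposreal _ Hx0). intros u Hu. change (Rabs (u - x) < Rabs x) in Hu.
  apply Rabs_def2 in Hu. destruct (Rle_dec 0 x).
  - rewrite Rabs_right in Hu by lra. assert (0 < p) by nra. nra.
  - rewrite Rabs_left in Hu by lra. assert (p < 0) by nra. nra.
Qed.

Lemma Cn_on_sub n (U V : R -> R -> Prop) f :
  (forall x xi, U x xi -> V x xi) -> Cn_on n V f -> Cn_on n U f.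
Proof.
  intros HUV. revert f; induction n as [|n IH]; intros f Hf.
  - intros x xi H. apply Hf; auto.
  - destruct Hf as [Hc [Hd [Hx Hxi]]].
    split; [|split; [|split]]; [intros x xi H; apply Hc | intros x xi H; apply Hd | |]; auto.
Qed.

Lemma Cn_on_local n (U : R -> R -> Prop) f :
  (forall x xi, U x xi -> exists V : R -> R -> Prop, V x xi /\ Cn_on n V f) -> Cn_on n U f.
Proof.
  revert f; induction n as [|n IH]; intros f Hf.
  - intros x xi H. destruct (Hf x xi H) as [V [HV HC]]. apply HC; auto.
  - split; [|split; [|split]].
    + intros x xi H. destruct (Hf x xi H) as [V [HV HC]]. apply HC; auto.
    + intros x xi H. destruct (Hf x xi H) as [V [HV HC]]. apply HC; auto.
    + apply IH. intros x xi H. destruct (Hf x xi H) as [V [HV HC]]. exists V; split; auto. apply HC.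
    + apply IH. intros x xi H. destruct (Hf x xi H) as [V [HV HC]]. exists V; split; auto. apply HC.
Qed.

Lemma Cn_on_ext n (V : R -> R -> Prop) f g : open_2d V ->
  (forall x xi, V x xi -> f x xi = g x xi) -> Cn_on n V f -> Cn_on n V g.
Proof.
  intros HV. revert f g; induction n as [|n IH]; intros f g Hfg Hf;
    assert (Hloc : forall x xi, V x xi -> locally_2d (fun u v => f u v = g u v) x xi)
      by (intros x xi H; apply locally_2d_impl with V; auto; now apply locally_2d_forall).
  - intros x xi H.
    apply (continuous_ext_loc (fun p => g (fst p) (snd p)) (fun p => f (fst p) (snd p)));
      [|apply Hf; auto].
    apply (locally_2d_locally (fun u v => f u v = g u v)); auto.
  - destruct Hf as [Hc [Hd [Hx Hxi]]]. split; [|split; [|split]].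
    + intros x xi H.
      apply (continuous_ext_loc (fun p => g (fst p) (snd p)) (fun p => f (fst p) (snd p)));
        [|apply Hc; auto].
      apply (locally_2d_locally (fun u v => f u v = g u v)); auto.
    + intros x xi H. destruct (Hd x xi H) as [H1 H2]. split.
      * apply ex_derive_ext_loc with (fun y => f y xi); auto.
        apply (locally_2d_1d_const_y (fun u v => f u v = g u v)); auto.
      * apply ex_derive_ext_loc with (fun y => f x y); auto.
        apply (locally_2d_1d_const_x (fun u v => f u v = g u v)); auto.
    + apply IH with (dx f); auto. intros x xi H. apply Derive_ext_loc.
      apply (locally_2d_1d_const_y (fun u v => f u v = g u v)); auto.
    + apply IH with (dxi f); auto. intros x xi H. apply Derive_ext_loc.
      apply (locally_2d_1d_const_x (fun u v => f u v = g u v)); auto.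
Qed.

Lemma Cn_on_opp n U f : Cn_on n U f -> Cn_on n U (fun x xi => - f x xi).
Proof.
  revert f; induction n as [|n IH]; intros f Hf.
  - intros x xi H. apply (continuous_opp (fun p => f (fst p) (snd p))), Hf; auto.
  - destruct Hf as [Hc [Hd [Hx Hxi]]]. split; [|split; [|split]].
    + intros x xi H. apply (continuous_opp (fun p => f (fst p) (snd p))), Hc; auto.
    + intros x xi H. destruct (Hd x xi H).
      split; [apply (ex_derive_opp (fun y => f y xi)) | apply (ex_derive_opp (fun y => f x y))]; auto.
    + replace (dx (fun x xi => - f x xi)) with (fun x xi => - dx f x xi); auto.
      do 2 (apply functional_extensionality; intro). unfold dx. now rewrite Derive_opp.
    + replace (dxi (fun x xi => - f x xi)) with (fun x xi => - dxi f x xi); auto.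
      do 2 (apply functional_extensionality; intro). unfold dxi. now rewrite Derive_opp.
Qed.

Lemma continuous_affine_mul (Q : R -> R) al be x xi : continuous Q x ->
  continuous (fun p : R * R => (al * snd p + be) * Q (fst p)) (x, xi).
Proof.
  intros HQ.
  apply (continuous_comp_2 (fun p : R * R => al * snd p + be) (fun p => Q (fst p)) (fun u v => u * v)).
  - apply (continuous_plus (fun p : R * R => al * snd p) (fun _ => be)); [|apply continuous_const].
    apply (continuous_scal_r al (fun p : R * R => snd p)), continuous_snd.
  - apply (continuous_comp fst Q); [apply continuous_fst | exact HQ].
  - apply (continuous_mult (fun p : R * R => fst p) (fun p : R * R => snd p));
      [apply continuous_fst | apply continuous_snd].
Qed.

(* The affine form in [xi] is what the induction needs: [dxi] sends it to [0 * xi + al]. *)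
Lemma Cn_on_affine_mul n a b (W : R -> Prop) Q : (forall j, Cn_interval j a b Q) ->
  forall al be, Cn_on n (fun x xi => a < x < b /\ W xi) (fun x xi => (al * xi + be) * Q x).
Proof.
  revert Q; induction n as [|n IH]; intros Q HQ al be.
  - intros x xi [Hx _]. apply continuous_affine_mul, (Cn_interval_continuous 0 a b); auto.
  - split; [|split; [|split]].
    + intros x xi [Hx _]. apply continuous_affine_mul, (Cn_interval_continuous 0 a b); auto.
    + intros x xi [Hx _]. split.
      * apply ex_derive_scal. destruct (HQ 1%nat) as [_ [Hd _]]. apply Hd; auto.
      * apply ex_derive_mult; [auto_derive; auto | apply ex_derive_const].
    + replace (dx (fun x xi => (al * xi + be) * Q x)) with (fun x xi => (al * xi + be) * Derive Q x).
      { apply IH. intros j. now destruct (HQ (S j)) as [_ [_ H]]. }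
      do 2 (apply functional_extensionality; intro). unfold dx. now rewrite Derive_scal.
    + replace (dxi (fun x xi => (al * xi + be) * Q x)) with (fun x xi => (0 * xi + al) * Q x); auto.
      do 2 (apply functional_extensionality; intro). unfold dxi. symmetry.
      apply is_derive_unique. auto_derive; auto. ring.
Qed.

(** * Derivatives and homogeneous functions *)

Lemma is_derive_eq (f : R -> R) (x d d' : R) : is_derive f x d -> d = d' -> is_derive f x d'.
Proof. now intros H <-. Qed.

(* Specializations to [R -> R] stating derivatives with [*], [+], [-] instead of [scal],
   [mult], [plus], so that [ring] applies to them. *)
Lemma is_derive_Rmult (f g : R -> R) x df dg : is_derive f x df -> is_derive g x dg ->
  is_derive (fun t => f t * g t) x (df * g x + f x * dg).
Proof. intros H1 H2. apply (is_derive_mult f g x df dg H1 H2). intros; apply Rmult_comm. Qed.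

Lemma is_derive_Rcomp (f g : R -> R) x df dg : is_derive f (g x) df -> is_derive g x dg ->
  is_derive (fun t => f (g t)) x (dg * df).
Proof. exact (is_derive_comp f g x df dg). Qed.

Lemma is_derive_Rminus (f g : R -> R) x df dg : is_derive f x df -> is_derive g x dg ->
  is_derive (fun t => f t - g t) x (df - dg).
Proof. exact (is_derive_minus f g x df dg). Qed.

Lemma is_derive_Rplus (f g : R -> R) x df dg : is_derive f x df -> is_derive g x dg ->
  is_derive (fun t => f t + g t) x (df + dg).
Proof. exact (is_derive_plus f g x df dg). Qed.

Lemma is_derive_continuous (f : R -> R) x d : is_derive f x d -> continuous f x.
Proof. intros H. apply (ex_derive_continuous f). now exists d. Qed.

Lemma is_derive_continuity_pt (f : R -> R) x d : is_derive f x d -> continuity_pt f x.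
Proof. intros H. apply continuity_pt_filterlim. now apply is_derive_continuous with d. Qed.

Lemma is_derive_RInt_0 (g : R -> R) t :
  (forall s, continuous g s) -> is_derive (fun s => RInt g 0 s) t (g t).
Proof.
  intros Hg. apply (is_derive_RInt g (fun s => RInt g 0 s) 0 t); auto.
  apply filter_forall. intros u. apply (RInt_correct g), (ex_RInt_continuous g). auto.
Qed.

Lemma derive_zero_const_ge (f : R -> R) T :
  (forall t, T <= t -> is_derive f t 0) -> forall t, T <= t -> f t = f T.
Proof.
  intros Hd t Ht. destruct (MVT_gen f T t (fun _ => 0)) as [c [_ Heq]]; [| |lra];
    intros x Hx; rewrite Rmin_left in Hx by lra.
  - apply Hd. lra.
  - apply is_derive_continuity_pt with 0, Hd. lra.
Qed.

Lemma derive_zero_const (f : R -> R) : (forall t, is_derive f t 0) -> forall t, f t = f 0.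
Proof.
  intros Hd t. destruct (MVT_gen f 0 t (fun _ => 0)) as [c [_ Heq]]; [| |lra]; intros x _.
  - apply Hd.
  - apply is_derive_continuity_pt with 0, Hd.
Qed.

Lemma is_lim_derive_zero (f : R -> R) T :
  (forall t, T <= t -> is_derive f t 0) -> is_lim f p_infty (f T).
Proof.
  intros Hd. apply is_lim_ext_loc with (fun _ => f T); [|apply is_lim_const].
  exists T. intros x Hx. symmetry. apply derive_zero_const_ge; auto. lra.
Qed.

Lemma Rabs_sign x : Rabs x = sign x * x.
Proof.
  destruct (Rtotal_order x 0) as [H|[->|H]].
  - rewrite Rabs_left, sign_eq_m1; lra.
  - rewrite Rabs_R0. ring.
  - rewrite Rabs_right, sign_eq_1; lra.
Qed.

Lemma sign_sqr x : x <> 0 -> sign x * sign x = 1.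
Proof.
  intros Hx. destruct (Rtotal_order x 0) as [H|[H|H]]; [|contradiction|].
  - rewrite sign_eq_m1; lra.
  - rewrite sign_eq_1; lra.
Qed.

Lemma sign_same x y : 0 < x * y -> sign x = sign y.
Proof.
  intros H. destruct (Rtotal_order x 0) as [Hx|[Hx|Hx]]; [| subst; lra |].
  - rewrite !sign_eq_m1; nra.
  - rewrite !sign_eq_1; nra.
Qed.

Lemma sign_pos_mult lam xi : 0 < lam -> sign (lam * xi) = sign xi.
Proof. intros H. rewrite sign_mult, sign_eq_1; lra. Qed.

Lemma pos_homog1_sign f x xi : pos_homog1 f -> xi <> 0 -> f x xi = Rabs xi * f x (sign xi).
Proof.
  intros Hf Hxi. rewrite <- Hf by (apply Rabs_pos_lt || apply sign_neq_0; auto).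
  f_equal. rewrite Rabs_sign.
  replace (sign xi * xi * sign xi) with (sign xi * sign xi * xi) by ring.
  rewrite sign_sqr; auto; ring.
Qed.

Lemma locally_same_sign xi : xi <> 0 -> locally xi (fun e => 0 < e * xi).
Proof. intros Hxi. exact (open_same_sign xi xi (Rsqr_pos_lt xi Hxi)). Qed.

Lemma ex_derive_slice (f : R -> R -> R) s y :
  s <> 0 -> smooth_on nonzero_xi f -> ex_derive (fun x => f x s) y.
Proof.
  intros Hs Hf. destruct (Cn_interval_slice 1 (y - 1) (y + 1) f s Hs (Hf 1%nat)) as [_ [Hd _]].
  apply Hd. lra.
Qed.

Lemma continuous_slice (f : R -> R -> R) s y :
  s <> 0 -> smooth_on nonzero_xi f -> continuous (fun x => f x s) y.
Proof.
  intros Hs Hf. apply (ex_derive_continuous (fun x => f x s)), ex_derive_slice; auto.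
Qed.

Lemma dx_pos_homog1 f x xi : pos_homog1 f -> xi <> 0 ->
  dx f x xi = Rabs xi * Derive (fun y => f y (sign xi)) x.
Proof.
  intros Hf Hxi. unfold dx. rewrite <- Derive_scal. apply Derive_ext.
  intros y. now apply pos_homog1_sign.
Qed.

Lemma dxi_pos_homog1 f x xi : pos_homog1 f -> xi <> 0 -> dxi f x xi = sign xi * f x (sign xi).
Proof.
  intros Hf Hxi. unfold dxi. apply is_derive_unique.
  apply is_derive_ext_loc with (fun e => sign xi * e * f x (sign xi)).
  - generalize (locally_same_sign xi Hxi). apply filter_imp. intros e He.
    assert (e <> 0) by (intros ->; lra).
    rewrite (pos_homog1_sign f x e Hf), Rabs_sign, (sign_same e xi); auto.
  - auto_derive; auto. ring.
Qed.

Lemma PB_pos_homog1 X f x xi : pos_homog1 f -> xi <> 0 ->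
  PB X f x xi = Rabs xi * (X x * Derive (fun y => f y (sign xi)) x - Derive X x * f x (sign xi)).
Proof.
  intros Hf Hxi. unfold PB. rewrite dx_pos_homog1, dxi_pos_homog1, Rabs_sign; auto. ring.
Qed.

Lemma PB_ext_loc X f g x xi :
  locally_2d (fun u v => f u v = g u v) x xi -> PB X f x xi = PB X g x xi.
Proof.
  intros H. unfold PB, dx, dxi.
  rewrite (Derive_ext_loc (fun y => f y xi) (fun y => g y xi)),
    (Derive_ext_loc (fun e => f x e) (fun e => g x e)); auto.
  - apply (locally_2d_1d_const_x (fun u v => f u v = g u v)), H.
  - apply (locally_2d_1d_const_y (fun u v => f u v = g u v)), H.
Qed.

Lemma PB_linear_xi X (Q : R -> R) x xi : ex_derive Q x ->
  PB X (fun x xi => xi * Q x) x xi = xi * (X x * Derive Q x - Derive X x * Q x).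
Proof.
  intros HQ. unfold PB, dx, dxi. rewrite Derive_scal.
  replace (Derive (fun e => e * Q x) xi) with (Q x); [ring|].
  symmetry. apply is_derive_unique. auto_derive; auto. ring.
Qed.

(** * The Hamiltonian flow *)

Section HamiltonianFlow.

Variables (X : R -> R) (Phi : R -> R * R -> R * R).
Hypotheses (HX : smooth1 X) (HPhi : is_ham_flow X Phi).

Lemma smooth1_is_derive x : is_derive X x (Derive X x).
Proof. apply Derive_correct, (HX 1%nat x). Qed.

Lemma smooth1_Derive_continuous x : continuous (Derive X) x.
Proof. apply is_derive_continuous with (Derive (Derive X) x), Derive_correct, (HX 2%nat x). Qed.

Lemma flow_at_0 z : Phi 0 z = z.
Proof. apply HPhi. Qed.

Lemma flow_fst_derive z t : is_derive (fun s => fst (Phi s z)) t (X (fst (Phi t z))).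
Proof. apply HPhi. Qed.

Lemma flow_snd_derive z t :
  is_derive (fun s => snd (Phi s z)) t (- snd (Phi t z) * Derive X (fst (Phi t z))).
Proof. apply HPhi. Qed.

Lemma flow_fst_continuous z t : continuous (fun s => fst (Phi s z)) t.
Proof. exact (is_derive_continuous _ _ _ (flow_fst_derive z t)). Qed.

Lemma flow_snd_continuous z t : continuous (fun s => snd (Phi s z)) t.
Proof. exact (is_derive_continuous _ _ _ (flow_snd_derive z t)). Qed.

Lemma flow_energy z t : snd (Phi t z) * X (fst (Phi t z)) = snd z * X (fst z).
Proof.
  rewrite (derive_zero_const (fun s => snd (Phi s z) * X (fst (Phi s z)))), flow_at_0; auto.
  intros s. eapply is_derive_eq.
  - apply is_derive_Rmult; [apply flow_snd_derive|].
    apply (is_derive_Rcomp X (fun s => fst (Phi s z))); [apply smooth1_is_derive | apply flow_fst_derive].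
  - simpl. ring.
Qed.

(* [xi(t) exp (int_0^t X'(x(s)) ds)] is constant, so [xi] never changes sign. *)
Lemma flow_snd_same_sign z t : snd z <> 0 -> 0 < snd (Phi t z) * snd z.
Proof.
  intros Hz.
  set (g := fun s => Derive X (fst (Phi s z))).
  assert (Hg : forall s, continuous g s).
  { intros s. apply (continuous_comp (fun s => fst (Phi s z)) (Derive X));
      [apply flow_fst_continuous | apply smooth1_Derive_continuous]. }
  assert (Hw : snd (Phi t z) * exp (RInt g 0 t) = snd z).
  { rewrite (derive_zero_const (fun s => snd (Phi s z) * exp (RInt g 0 s))), flow_at_0, RInt_point.
    - change (snd z * exp 0 = snd z). rewrite exp_0. ring.
    - intros s. eapply is_derive_eq.
      + apply is_derive_Rmult; [apply flow_snd_derive|].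
        apply (is_derive_Rcomp exp (fun s => RInt g 0 s));
          [apply is_derive_exp | apply is_derive_RInt_0; auto].
      + unfold g. simpl. ring. }
  pose proof (exp_pos (RInt g 0 t)). pose proof (Rsqr_pos_lt _ Hz). unfold Rsqr in *.
  rewrite <- Hw. nra.
Qed.

Lemma flow_snd_neq0 z t : snd z <> 0 -> snd (Phi t z) <> 0.
Proof. intros Hz H. pose proof (flow_snd_same_sign z t Hz) as Hs. rewrite H in Hs. lra. Qed.

Lemma flow_sign_snd z t : snd z <> 0 -> sign (snd (Phi t z)) = sign (snd z).
Proof. intros Hz. apply sign_same, flow_snd_same_sign, Hz. Qed.

Lemma flow_X_same_sign z t : snd z <> 0 -> X (fst z) <> 0 ->
  0 < X (fst (Phi t z)) * X (fst z).
Proof.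
  intros Hz Hx. pose proof (flow_energy z t) as He. pose proof (flow_snd_same_sign z t Hz).
  assert (Hsq : 0 < (snd z * X (fst z)) * (snd z * X (fst z))).
  { apply (Rsqr_pos_lt (snd z * X (fst z))), Rmult_integral_contrapositive; auto. }
  rewrite <- He in Hsq at 1. nra.
Qed.

Lemma flow_homog_continuous f z t : smooth_on nonzero_xi f -> pos_homog1 f -> snd z <> 0 ->
  continuous (fun s => f (fst (Phi s z)) (snd (Phi s z))) t.
Proof.
  intros Hf Hh Hz.
  apply (continuous_ext (fun s => Rabs (snd (Phi s z)) * f (fst (Phi s z)) (sign (snd z)))).
  { intros u. rewrite (pos_homog1_sign f _ _ Hh (flow_snd_neq0 z u Hz)), flow_sign_snd; auto. }
  apply (continuous_mult (fun s => Rabs (snd (Phi s z))) (fun s => f (fst (Phi s z)) (sign (snd z)))).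
  - apply (continuous_comp (fun s => snd (Phi s z)) Rabs);
      [apply flow_snd_continuous | apply continuous_Rabs].
  - apply (continuous_comp (fun s => fst (Phi s z)) (fun y => f y (sign (snd z))));
      [apply flow_fst_continuous | apply continuous_slice; auto; apply sign_neq_0; auto].
Qed.

(* Along the trajectory [f = sign(xi0) xi f(x, sign xi0)], which reduces the chain rule to
   one-variable derivatives. *)
Lemma flow_homog_derive f z t : smooth_on nonzero_xi f -> pos_homog1 f -> snd z <> 0 ->
  is_derive (fun s => f (fst (Phi s z)) (snd (Phi s z))) t
    (PB X f (fst (Phi t z)) (snd (Phi t z))).
Proof.
  intros Hf Hh Hz. set (s := sign (snd z)).
  assert (Hs : s <> 0) by apply sign_neq_0, Hz.
  apply is_derive_ext with (fun u => s * snd (Phi u z) * f (fst (Phi u z)) s).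
  { intros u. rewrite (pos_homog1_sign f _ _ Hh (flow_snd_neq0 z u Hz)), Rabs_sign.
    unfold s. now rewrite flow_sign_snd. }
  eapply is_derive_eq.
  - apply is_derive_Rmult; [apply (is_derive_scal (fun u => snd (Phi u z))), flow_snd_derive|].
    apply (is_derive_Rcomp (fun y => f y s) (fun u => fst (Phi u z)));
      [apply Derive_correct, ex_derive_slice; auto | apply flow_fst_derive].
  - rewrite PB_pos_homog1, Rabs_sign, flow_sign_snd by auto using flow_snd_neq0.
    fold s. simpl. ring.
Qed.

Lemma ell_approx_derive k m z t :
  smooth_on nonzero_xi k -> pos_homog1 k -> smooth_on nonzero_xi m -> pos_homog1 m -> snd z <> 0 ->
  is_derive (ell_approx k m Phi z) t
    (PB X k (fst (Phi t z)) (snd (Phi t z)) - m (fst (Phi t z)) (snd (Phi t z))).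
Proof.
  intros Hks Hkh Hms Hmh Hz. unfold ell_approx.
  apply (is_derive_Rminus (fun s => k (fst (Phi s z)) (snd (Phi s z)))).
  - apply flow_homog_derive; auto.
  - apply (is_derive_RInt_0 (fun s => m (fst (Phi s z)) (snd (Phi s z)))).
    intros s. apply flow_homog_continuous; auto.
Qed.

End HamiltonianFlow.

(** * One-dimensional dynamics *)

Lemma continuous_pos_locally (F : R -> R) c :
  continuous F c -> 0 < F c -> locally c (fun v => 0 < F v).
Proof. intros HF Hc. exact (HF _ (open_gt 0 (F c) Hc)). Qed.

Lemma continuous_neg_locally (F : R -> R) c :
  continuous F c -> F c < 0 -> locally c (fun v => F v < 0).
Proof. intros HF Hc. exact (HF _ (open_lt 0 (F c) Hc)). Qed.

Section FirstZero.

Variable F : R -> R.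
Hypothesis HF : forall u, continuous F u.

Lemma first_zero_right x0 : 0 < F x0 -> (exists z, x0 < z /\ F z = 0) ->
  exists c, x0 < c /\ F c = 0 /\ forall u, x0 <= u < c -> 0 < F u.
Proof.
  intros Hx0 [z [Hz HFz]].
  set (E := fun y => x0 <= y /\ forall u, x0 <= u <= y -> 0 < F u).
  destruct (completeness E) as [c [Hub Hlub]].
  { exists z. intros y [Hy HE]. destruct (Rle_dec y z) as [|Hyz]; auto.
    specialize (HE z). lra. }
  { exists x0. split; [lra|]. intros u Hu. now replace u with x0 by lra. }
  assert (Hxc : x0 <= c) by (apply Hub; split; [lra|]; intros u Hu; now replace u with x0 by lra).
  assert (Hpos : forall u, x0 <= u < c -> 0 < F u).
  { intros u Hu. apply NNPP. intros Hn. assert (c <= u); [|lra].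
    apply Hlub. intros y [Hy HE]. destruct (Rle_dec y u) as [|Hyu]; auto.
    exfalso. apply Hn, HE. lra. }
  assert (HFc : F c = 0).
  { destruct (Rtotal_order (F c) 0) as [Hn|[Hc|Hp]]; auto; exfalso.
    - destruct (continuous_neg_locally F c (HF c) Hn) as [eps Heps].
      assert (x0 < c) by (destruct Hxc as [|<-]; [auto | lra]).
      set (u := Rmax x0 (c - eps / 2)).
      assert (Hu : x0 <= u < c).
      { unfold u. split; [apply Rmax_l|]. apply Rmax_lub_lt; [|pose proof (cond_pos eps)]; lra. }
      specialize (Hpos u Hu). enough (F u < 0) by lra. apply Heps. change (Rabs (u - c) < eps).
      rewrite Rabs_left by lra. pose proof (Rmax_r x0 (c - eps / 2)). unfold u in *. lra.
    - destruct (continuous_pos_locally F c (HF c) Hp) as [eps Heps]. pose proof (cond_pos eps).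
      enough (c + eps / 2 <= c) by lra. apply Hub. split; [lra|]. intros u Hu.
      destruct (Rlt_le_dec u c); [apply Hpos; lra|]. apply Heps. change (Rabs (u - c) < eps).
      rewrite Rabs_right; lra. }
  exists c. repeat split; auto. destruct Hxc as [|<-]; auto. lra.
Qed.

Lemma derive_nonpos_at_zero_from_left c d a : is_derive F c d -> F c = 0 -> a < c ->
  (forall u, a < u < c -> 0 < F u) -> d <= 0.
Proof.
  intros Hd Hc Ha Hp. apply is_derive_Reals in Hd.
  destruct (Rle_dec d 0) as [|Hn]; auto. exfalso.
  destruct (Hd (d / 2)) as [del Hdel]; [lra|].
  set (h := - Rmin del (c - a) / 2).
  assert (Hm : 0 < Rmin del (c - a)) by (apply Rmin_pos; [apply cond_pos | lra]).
  pose proof (Rmin_l del (c - a)). pose proof (Rmin_r del (c - a)).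
  specialize (Hdel h ltac:(unfold h; lra) ltac:(unfold h; rewrite Rabs_left; lra)).
  rewrite Hc, Rminus_0_r in Hdel. apply Rabs_def2 in Hdel.
  assert (Hq : F (c + h) / h < 0).
  { apply Rmult_pos_neg; [apply Hp; unfold h; lra | apply Rinv_lt_0_compat; unfold h; lra]. }
  lra.
Qed.

End FirstZero.

Section AutonomousODE.

Variables F f : R -> R.
Hypotheses (HF : forall u, continuous F u) (Hf : forall t, is_derive f t (F (f t))).
Hypothesis Hpos : forall t, 0 < F (f t).

Lemma ode_continuity_pt t : continuity_pt f t.
Proof. exact (is_derive_continuity_pt _ _ _ (Hf t)). Qed.

Lemma ode_increasing s t : s < t -> f s < f t.
Proof.
  intros Hst. destruct (MVT_gen f s t (fun t => F (f t))) as [c [_ Heq]].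
  - intros; apply Hf.
  - intros; apply ode_continuity_pt.
  - specialize (Hpos c). nra.
Qed.

Lemma ode_nondecreasing s t : s <= t -> f s <= f t.
Proof. intros [H| ->]; [left; now apply ode_increasing | lra]. Qed.

(* No uniqueness theorem is needed: [F (f t)] never vanishes, so [f] cannot reach [c]. *)
Lemma ode_below_zero c : F c = 0 -> f 0 < c -> forall t, f t < c.
Proof.
  intros Hc Hc0 t. destruct (Rlt_le_dec (f t) c) as [|Hge]; auto. exfalso.
  destruct (IVT_gen f 0 t c ode_continuity_pt) as [s [_ Hs]].
  - split; [apply Rle_trans with (f 0); [apply Rmin_l | lra]
           | apply Rle_trans with (f t); [lra | apply Rmax_r]].
  - specialize (Hpos s). rewrite Hs in Hpos. lra.
Qed.

(* If [f] never reached [u], it would stay in [[f 0, u]], where [F] is bounded below by a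
   positive constant, and so [f] would grow linearly. *)
Lemma ode_reaches u : f 0 <= u -> (forall v, f 0 <= v <= u -> 0 < F v) ->
  exists T, 0 <= T /\ f T = u.
Proof.
  intros Hu HFu.
  destruct (continuity_ab_min F (f 0) u Hu) as [v [Hmin Hv]].
  { intros v Hv. apply continuity_pt_filterlim, HF. }
  set (mu := F v). assert (Hmu : 0 < mu) by (apply HFu; auto).
  set (t1 := (u - f 0) / mu + 1).
  assert (Ht1 : 0 < t1) by (unfold t1; pose proof (Rdiv_le_0_compat (u - f 0) mu); lra).
  destruct (Rle_lt_dec u (f t1)) as [Hge|Hlt].
  - destruct (IVT_gen f 0 t1 u ode_continuity_pt) as [T [HT HfT]].
    + rewrite Rmin_left, Rmax_right by (pose proof (ode_increasing 0 t1 Ht1); lra). lra.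
    + exists T. rewrite Rmin_left in HT by lra. split; [lra | exact HfT].
  - exfalso. destruct (MVT_gen f 0 t1 (fun t => F (f t))) as [s [Hs Heq]].
    + intros; apply Hf.
    + intros; apply ode_continuity_pt.
    + rewrite Rmin_left, Rmax_right in Hs by lra.
      assert (Hfs : mu <= F (f s)).
      { apply Hmin. split; [now apply ode_nondecreasing|].
        pose proof (ode_nondecreasing s t1 (proj2 Hs)). lra. }
      assert (mu * t1 = u - f 0 + mu) by (unfold t1; field; lra).
      assert (mu * t1 <= F (f s) * t1) by (apply Rmult_le_compat_r; lra). lra.
Qed.

End AutonomousODE.

(** * The limit [ell^+] *)

(* On a trajectory [xi X(x)] is constant and [dt = dx / X(x)], which turns the time
   integral of [m] in [ell_approx] into a space integral; this is the resulting closed form. *)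
Definition ell_profile (X : R -> R) (k m : R -> R -> R) (s y0 x : R) : R :=
  X x * (k y0 s / X y0 - RInt (fun u => m u s / (X u * X u)) x y0).

Lemma Cn_interval_profile_integrand X m n a b s : smooth1 X -> smooth_on nonzero_xi m -> s <> 0 ->
  (forall u, a < u < b -> X u <> 0) -> Cn_interval n a b (fun u => m u s / (X u * X u)).
Proof.
  intros HX Hm Hs HXnz. apply Cn_interval_mult; [apply Cn_interval_slice; auto|].
  apply Cn_interval_inv; [intros u Hu; apply Rmult_integral_contrapositive; auto|].
  apply Cn_interval_mult; apply Cn_interval_smooth1; auto.
Qed.

Lemma Cn_interval_ell_profile X k m n a b s y0 : smooth1 X -> smooth_on nonzero_xi m -> s <> 0 ->
  (forall u, a < u < b -> X u <> 0) -> a < y0 < b -> Cn_interval n a b (ell_profile X k m s y0).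
Proof.
  intros HX Hm Hs HXnz Hy. apply Cn_interval_mult; [apply Cn_interval_smooth1; auto|].
  apply Cn_interval_plus; [apply Cn_interval_const|].
  apply Cn_interval_opp, Cn_interval_pred, Cn_interval_RInt; auto.
  apply Cn_interval_profile_integrand; auto.
Qed.

Lemma ell_profile_derive X k m a b s y0 x : smooth1 X -> smooth_on nonzero_xi m -> s <> 0 ->
  (forall u, a < u < b -> X u <> 0) -> a < y0 < b -> a < x < b ->
  is_derive (ell_profile X k m s y0) x
    (Derive X x * (k y0 s / X y0 - RInt (fun u => m u s / (X u * X u)) x y0)
     + X x * (m x s / (X x * X x))).
Proof.
  intros HX Hm Hs HXnz Hy Hx. unfold ell_profile. eapply is_derive_eq.
  - apply is_derive_Rmult; [apply smooth1_is_derive; auto|].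
    apply is_derive_Rminus; [apply is_derive_const|].
    apply (is_derive_RInt_lower _ a b); auto. intros u Hu.
    apply (Cn_interval_continuous 0 a b); auto. apply Cn_interval_profile_integrand; auto.
  - unfold zero. simpl. ring.
Qed.

Definition ell_limit (k m : R -> R -> R) (Phi : R -> R * R -> R * R) (x xi : R) : R :=
  real (Lim (ell_approx k m Phi (x, xi)) p_infty).

Lemma ell_limit_eq k m Phi x xi (l : R) :
  is_lim (ell_approx k m Phi (x, xi)) p_infty l -> ell_limit k m Phi x xi = l.
Proof. intros H. unfold ell_limit. now rewrite (is_lim_unique _ _ _ H). Qed.

Section EllLimit.

Variables (X : R -> R) (Phi : R -> R * R -> R * R) (k m : R -> R -> R).
Hypotheses (HX : smooth1 X) (HPhi : is_ham_flow X Phi).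
Hypotheses (Hks : smooth_on nonzero_xi k) (Hkh : pos_homog1 k).
Hypotheses (Hms : smooth_on nonzero_xi m) (Hmh : pos_homog1 m).

Lemma is_lim_ell_approx_from z T : snd z <> 0 ->
  (forall t, T <= t -> m (fst (Phi t z)) (snd (Phi t z)) = PB X k (fst (Phi t z)) (snd (Phi t z))) ->
  is_lim (ell_approx k m Phi z) p_infty (ell_approx k m Phi z T).
Proof.
  intros Hz HmT. apply is_lim_derive_zero. intros t Ht.
  eapply is_derive_eq; [apply (ell_approx_derive X Phi); auto|].
  apply Rminus_diag_eq. symmetry. auto.
Qed.

Lemma is_lim_ell_approx_profile x0 xi0 a b y0 T : xi0 <> 0 ->
  (forall u, a < u < b -> X u <> 0) -> a < y0 < b ->
  (forall t, 0 <= t -> a < fst (Phi t (x0, xi0)) < b) ->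
  0 <= T -> fst (Phi T (x0, xi0)) = y0 ->
  (forall t, T <= t -> m (fst (Phi t (x0, xi0))) (snd (Phi t (x0, xi0)))
                     = PB X k (fst (Phi t (x0, xi0))) (snd (Phi t (x0, xi0)))) ->
  is_lim (ell_approx k m Phi (x0, xi0)) p_infty (Rabs xi0 * ell_profile X k m (sign xi0) y0 x0).
Proof.
  intros Hxi HXnz Hy Htraj HT HxT HmT.
  set (z := (x0, xi0)) in *. set (s := sign xi0).
  set (g := fun u => m u s / (X u * X u)).
  set (M := fun u => m (fst (Phi u z)) (snd (Phi u z))).
  assert (Hz : snd z <> 0) by exact Hxi.
  assert (Hsg : forall u, sign (snd (Phi u z)) = s) by (intros; apply (flow_sign_snd X Phi); auto).
  assert (HM : forall u, M u = s * snd (Phi u z) * m (fst (Phi u z)) s).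
  { intros u. unfold M. rewrite (pos_homog1_sign m _ _ Hmh (flow_snd_neq0 X Phi HX HPhi z u Hz)).
    now rewrite Rabs_sign, Hsg. }
  set (E := fun t => s * (xi0 * X x0) * (k y0 s / X y0 - RInt g (fst (Phi t z)) y0) - RInt M 0 t).
  assert (HE : forall t, 0 <= t -> is_derive E t 0).
  { intros t Ht. eapply is_derive_eq.
    - apply is_derive_Rminus;
        [apply (is_derive_scal (fun t => k y0 s / X y0 - RInt g (fst (Phi t z)) y0))|].
      + apply is_derive_Rminus; [apply is_derive_const|].
        apply (is_derive_Rcomp (fun v => RInt g v y0) (fun t => fst (Phi t z)));
          [|apply (flow_fst_derive X Phi); auto].
        apply (is_derive_RInt_lower g a b); auto. intros u Hu.
        apply (Cn_interval_continuous 0 a b); auto.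
        apply Cn_interval_profile_integrand; auto. apply sign_neq_0, Hxi.
      + apply is_derive_RInt_0. intros u. apply (flow_homog_continuous X Phi); auto.
    - rewrite HM. pose proof (flow_energy X Phi HX HPhi z t) as Hc. simpl in Hc. rewrite <- Hc.
      assert (X (fst (Phi t z)) <> 0) by (apply HXnz; auto). unfold g, zero. simpl. field; auto. }
  assert (HE0 : E 0 = Rabs xi0 * ell_profile X k m s y0 x0).
  { unfold E, ell_profile. rewrite (flow_at_0 X Phi), RInt_point, Rabs_sign; auto.
    unfold zero. simpl. fold s g. ring. }
  assert (HET : ell_approx k m Phi z T = E T).
  { unfold ell_approx, E. rewrite HxT, RInt_point.
    pose proof (flow_energy X Phi HX HPhi z T) as Hc. simpl in Hc. rewrite HxT in Hc.
    rewrite (pos_homog1_sign k _ _ Hkh (flow_snd_neq0 X Phi HX HPhi z T Hz)), Rabs_sign, Hsg.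
    fold M. rewrite <- Hc. assert (X y0 <> 0) by (apply HXnz; auto). unfold zero. simpl. field; auto. }
  rewrite <- HE0, <- (derive_zero_const_ge E 0 HE T HT), <- HET.
  apply is_lim_ell_approx_from; auto.
Qed.

End EllLimit.

Lemma periodic1_zeros_unbounded X x0 : periodic1 X -> X x0 = 0 ->
  forall y, (exists z, y < z /\ X z = 0) /\ (exists z, z < y /\ X z = 0).
Proof.
  intros HP H0 y.
  assert (Hn : forall n, X (x0 + INR n * (2 * PI)) = 0 /\ X (x0 - INR n * (2 * PI)) = 0).
  { induction n as [|n [IHp IHm]]; [simpl; rewrite Rmult_0_l, Rplus_0_r, Rminus_0_r; auto|].
    rewrite S_INR. split.
    - replace (x0 + (INR n + 1) * (2 * PI)) with (x0 + INR n * (2 * PI) + 2 * PI) by ring.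
      now rewrite HP.
    - rewrite <- IHm, <- HP. f_equal. ring. }
  pose proof PI_RGT_0.
  destruct (INR_archimed (2 * PI) (Rabs (y - x0))) as [n Hn']; [lra|].
  pose proof (Rle_abs (y - x0)). pose proof (Rle_abs (x0 - y)) as H2. rewrite Rabs_minus_sym in H2.
  split; [exists (x0 + INR n * (2 * PI)) | exists (x0 - INR n * (2 * PI))]; split;
    try apply Hn; lra.
Qed.

Lemma sign_cases x : x <> 0 -> sign x = 1 \/ sign x = -1.
Proof.
  intros Hx. destruct (Rtotal_order x 0) as [H|[H|H]]; [right | contradiction | left].
  - now apply sign_eq_m1.
  - now apply sign_eq_1.
Qed.

Section Orientation.

(* Multiplying positions by [e = 1] or [e = -1] reduces both directions of motion
   along the base to motion to the right, for the field [w |-> e X(e w)]. *)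
Variables (X : R -> R) (Phi : R -> R * R -> R * R) (e : R).
Hypotheses (HX : smooth1 X) (HPhi : is_ham_flow X Phi) (He : e = 1 \/ e = -1).

Lemma orient_involutive u : e * (e * u) = u.
Proof. destruct He as [-> | ->]; ring. Qed.

Lemma orient_dist u v : Rabs (e * u - e * v) = Rabs (u - v).
Proof.
  destruct He as [-> | ->]; [|rewrite <- Rabs_Ropp]; f_equal; ring.
Qed.

Lemma orient_interval a c u : a < c ->
  (Rmin (e * a) (e * c) < u < Rmax (e * a) (e * c) <-> a < e * u < c).
Proof.
  intros Hac. unfold Rmin, Rmax.
  destruct He as [-> | ->]; destruct (Rle_dec _ _); split; intros; lra.
Qed.

Lemma orient_zero_beyond y :
  (forall y, (exists z, y < z /\ X z = 0) /\ (exists z, z < y /\ X z = 0)) ->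
  exists z, y < z /\ X (e * z) = 0.
Proof.
  intros Hz. destruct He as [-> | ->].
  - destruct (proj1 (Hz y)) as [z [Hyz HXz]]. exists z. rewrite Rmult_1_l. auto.
  - destruct (proj2 (Hz (- y))) as [z [Hyz HXz]]. exists (- z).
    split; [lra|]. now replace (-1 * - z) with z by ring.
Qed.

Lemma orient_derive w : is_derive (fun w => e * X (e * w)) w (Derive X (e * w)).
Proof.
  assert (Hl : is_derive (fun w => e * w) w e) by (auto_derive; auto; ring).
  eapply is_derive_eq.
  - apply is_derive_scal, (is_derive_Rcomp X (fun w => e * w) w _ _ (smooth1_is_derive X HX _) Hl).
  - apply orient_involutive.
Qed.

Lemma orient_continuous w : continuous (fun w => e * X (e * w)) w.
Proof. exact (is_derive_continuous _ _ _ (orient_derive w)). Qed.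

(* [e c] is the first zero of [X] met from [x0] in the direction [e]; as [e X > 0] before it,
   [X'(e c) <= 0], and nondegeneracy puts it in [K^+]. *)
Lemma orient_basin x0 : X x0 <> 0 -> e = sign (X x0) ->
  (forall x, X x = 0 -> Derive X x <> 0) ->
  (forall y, (exists z, y < z /\ X z = 0) /\ (exists z, z < y /\ X z = 0)) ->
  exists a c, a < e * x0 < c /\ Kset X true (e * c) /\ forall w, a < w < c -> 0 < e * X (e * w).
Proof.
  intros Hx0 Hsg HXnd Hz. set (F := fun w => e * X (e * w)).
  assert (HF0 : 0 < F (e * x0)).
  { unfold F. rewrite orient_involutive, Hsg, <- Rabs_sign. apply Rabs_pos_lt, Hx0. }
  destruct (orient_zero_beyond (e * x0) Hz) as [z [Hz1 Hz2]].
  destruct (first_zero_right F orient_continuous (e * x0) HF0) as [c [Hc [HFc Hpos]]].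
  { exists z. split; [exact Hz1|]. unfold F. rewrite Hz2. ring. }
  assert (Hec : X (e * c) = 0).
  { unfold F in HFc. destruct He as [-> | ->]; lra. }
  assert (Hd : Derive X (e * c) <= 0).
  { apply (derive_nonpos_at_zero_from_left F c _ (e * x0)); auto; [apply orient_derive |].
    intros u Hu. apply Hpos. lra. }
  destruct (continuous_pos_locally F (e * x0) (orient_continuous _) HF0) as [eps Heps].
  pose proof (cond_pos eps).
  exists (e * x0 - eps), c. split; [lra|]. split.
  - split; auto. pose proof (HXnd _ Hec). lra.
  - intros w Hw. destruct (Rle_lt_dec (e * x0) w); [apply Hpos; lra|].
    apply Heps. change (Rabs (w - e * x0) < eps). rewrite Rabs_left; lra.
Qed.

Lemma orient_trajectory a c x xi y : X (e * c) = 0 ->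
  (forall w, a < w < c -> 0 < e * X (e * w)) -> a < e * x -> e * x <= y -> y < c -> xi <> 0 ->
  exists T, 0 <= T /\ fst (Phi T (x, xi)) = e * y /\
    (forall t, 0 <= t -> a < e * fst (Phi t (x, xi)) < c) /\
    (forall t, T <= t -> y <= e * fst (Phi t (x, xi)) < c).
Proof.
  intros Hc HF Hax Hxy Hyc Hxi.
  set (F := fun w => e * X (e * w)). set (f := fun t => e * fst (Phi t (x, xi))).
  assert (Hf : forall t, is_derive f t (F (f t))).
  { intros t. unfold F, f. rewrite orient_involutive.
    apply is_derive_scal, (flow_fst_derive X Phi HPhi). }
  assert (HFx : 0 < e * X x) by (rewrite <- (orient_involutive x); apply HF; lra).
  assert (Hpos : forall t, 0 < F (f t)).
  { intros t. unfold F, f. rewrite orient_involutive.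
    assert (HXx : X x <> 0) by (intros H; rewrite H in HFx; lra).
    pose proof (flow_X_same_sign X Phi HX HPhi (x, xi) t Hxi HXx). simpl in *.
    destruct He as [-> | ->]; nra. }
  assert (Hf0 : f 0 = e * x) by (unfold f; now rewrite (flow_at_0 X Phi)).
  assert (Hbelow : forall t, f t < c).
  { apply (ode_below_zero F f Hf Hpos); [unfold F; rewrite Hc; ring | lra]. }
  destruct (ode_reaches F f orient_continuous Hf Hpos y) as [T [HT HfT]]; [lra| |].
  { intros v Hv. apply HF. lra. }
  exists T. split; [exact HT|]. split; [|split].
  - rewrite <- HfT. unfold f. now rewrite orient_involutive.
  - intros t Ht. pose proof (ode_nondecreasing F f Hf Hpos 0 t Ht). pose proof (Hbelow t).
    fold (f t). lra.
  - intros t Ht. pose proof (ode_nondecreasing F f Hf Hpos T t Ht). pose proof (Hbelow t).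
    fold (f t). lra.
Qed.

End Orientation.

Section ForwardLimit.

Variables (X : R -> R) (Phi : R -> R * R -> R * R) (U : R -> Prop) (delta : R) (k m : R -> R -> R).
Hypotheses (HX : smooth1 X) (HPhi : is_ham_flow X Phi).
Hypothesis HXzeros : forall y, (exists z, y < z /\ X z = 0) /\ (exists z, z < y /\ X z = 0).
Hypothesis HXnd : forall x, X x = 0 -> Derive X x <> 0.
Hypotheses (HUo : open U) (HUK : forall x, Kset X true x -> U x).
Hypothesis HUinv : forall t x xi, 0 <= t -> U x -> U (fst (Phi t (x, xi))).
Hypotheses (Hks : smooth_on nonzero_xi k) (Hkh : pos_homog1 k).
Hypotheses (Hms : smooth_on nonzero_xi m) (Hmh : pos_homog1 m).
Hypothesis HmU : forall x xi, xi <> 0 -> U x -> m x xi = PB X k x xi.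
Hypothesis Hmpos : forall x xi, xi <> 0 -> m x xi >= delta / 2 * Rabs xi.

Local Notation ell := (ell_limit k m Phi).

Lemma is_lim_ell_approx_on_U x xi : xi <> 0 -> U x ->
  is_lim (ell_approx k m Phi (x, xi)) p_infty (k x xi).
Proof.
  intros Hxi Hx.
  assert (H0 : ell_approx k m Phi (x, xi) 0 = k x xi).
  { unfold ell_approx. rewrite (flow_at_0 X Phi), RInt_point; auto. unfold zero. simpl. ring. }
  rewrite <- H0. apply (is_lim_ell_approx_from X Phi k m); auto.
  intros t Ht. apply HmU; auto. apply (flow_snd_neq0 X Phi); auto.
Qed.

Lemma ell_on_U x xi : xi <> 0 -> U x -> ell x xi = k x xi.
Proof. intros Hxi Hx. now apply ell_limit_eq, is_lim_ell_approx_on_U. Qed.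

(* [y0] is a point past which the trajectories starting within [rho] of [x0] stay in [U]. *)
Lemma ell_chart x0 : X x0 <> 0 ->
  exists y0 rho lo hi, 0 < rho /\ lo < y0 < hi /\ lo < x0 - rho /\ x0 + rho < hi /\
    (forall u, lo < u < hi -> X u <> 0) /\
    forall x xi, x0 - rho < x < x0 + rho -> xi <> 0 ->
      is_lim (ell_approx k m Phi (x, xi)) p_infty (Rabs xi * ell_profile X k m (sign xi) y0 x).
Proof.
  intros Hx0. set (e := sign (X x0)).
  assert (He : e = 1 \/ e = -1) by now apply sign_cases.
  destruct (orient_basin X e HX He x0 Hx0 eq_refl HXnd HXzeros) as [a [c [Hac [HK HF]]]].
  destruct (HUo _ (HUK _ HK)) as [r Hr]. pose proof (cond_pos r).
  set (y := c - Rmin r (c - e * x0) / 2).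
  assert (0 < Rmin r (c - e * x0)) by (apply Rmin_pos; lra).
  pose proof (Rmin_l r (c - e * x0)). pose proof (Rmin_r r (c - e * x0)).
  set (rho := Rmin (e * x0 - a) (y - e * x0) / 2).
  assert (0 < Rmin (e * x0 - a) (y - e * x0)) by (apply Rmin_pos; unfold y; lra).
  pose proof (Rmin_l (e * x0 - a) (y - e * x0)). pose proof (Rmin_r (e * x0 - a) (y - e * x0)).
  assert (Hnear : forall x, Rabs (x - x0) <= rho -> a < e * x <= y).
  { intros x Hx. rewrite <- (orient_dist e He) in Hx. apply Rabs_le_between' in Hx.
    unfold rho in Hx. lra. }
  assert (Hint : forall u, Rmin (e * a) (e * c) < u < Rmax (e * a) (e * c) <-> a < e * u < c)
    by (intros; apply orient_interval; auto; lra).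
  assert (Hrho : 0 < rho) by (unfold rho; lra).
  assert (Hyc : y < c) by (unfold y; lra).
  set (lo := Rmin (e * a) (e * c)). set (hi := Rmax (e * a) (e * c)).
  assert (HXnz : forall u, lo < u < hi -> X u <> 0).
  { intros u Hu HXu. apply Hint in Hu. specialize (HF _ Hu).
    rewrite (orient_involutive e He), HXu in HF. lra. }
  assert (Hy : lo < e * y < hi).
  { apply Hint. rewrite (orient_involutive e He). split; [|exact Hyc].
    apply Rlt_le_trans with (e * x0); [lra|]. apply Hnear. rewrite Rminus_diag, Rabs_R0. lra. }
  exists (e * y), rho, lo, hi. split; [exact Hrho|]. split; [exact Hy|].
  split; [|split; [|split; [exact HXnz|]]].
  - apply Hint. enough (a < e * (x0 - rho) <= y) by lra. apply Hnear.
    replace (x0 - rho - x0) with (- rho) by ring. rewrite Rabs_Ropp, Rabs_pos_eq; lra.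
  - apply Hint. enough (a < e * (x0 + rho) <= y) by lra. apply Hnear.
    replace (x0 + rho - x0) with rho by ring. rewrite Rabs_pos_eq; lra.
  - intros x xi Hx Hxi. destruct (Hnear x) as [Hax Hxy]; [apply Rabs_le_between'; lra|].
    destruct (orient_trajectory X Phi e HX HPhi He a c x xi y (proj1 HK))
      as [T [HT [HxT [Htraj Hlate]]]]; auto.
    apply (is_lim_ell_approx_profile X Phi k m HX HPhi Hks Hkh Hms Hmh x xi lo hi (e * y) T); auto.
    + intros t Ht. apply Hint, Htraj, Ht.
    + intros t Ht. apply HmU; [apply (flow_snd_neq0 X Phi); auto|]. apply Hr.
      change (Rabs (fst (Phi t (x, xi)) - e * c) < r).
      rewrite <- (orient_dist e He), (orient_involutive e He).
      specialize (Hlate t Ht). rewrite Rabs_left by lra. unfold y in *. lra.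
Qed.

Lemma Bset_true_cases x xi : Bset X true x xi -> U x \/ X x <> 0.
Proof.
  intros [_ HK]. destruct (Req_dec (X x) 0) as [H0|H0]; [left|right; auto].
  apply HUK. split; auto. pose proof (HXnd x H0).
  destruct (Rtotal_order (Derive X x) 0) as [|[|]]; auto; [contradiction|].
  exfalso. apply HK. now split.
Qed.

Lemma ell_is_lim x xi : Bset X true x xi -> is_lim (ell_approx k m Phi (x, xi)) p_infty (ell x xi).
Proof.
  intros HB. destruct (Bset_true_cases x xi HB) as [HU|HXx]; destruct HB as [Hxi _].
  - rewrite ell_on_U; auto. now apply is_lim_ell_approx_on_U.
  - destruct (ell_chart x HXx) as [y0 [rho [lo [hi [Hrho [_ [_ [_ [_ Hlim]]]]]]]]].
    specialize (Hlim x xi ltac:(lra) Hxi). now rewrite (ell_limit_eq _ _ _ _ _ _ Hlim).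
Qed.

Lemma ell_pos_homog x xi lam : 0 < lam -> Bset X true x xi -> ell x (lam * xi) = lam * ell x xi.
Proof.
  intros Hlam HB.
  assert (Hlxi : lam * xi <> 0) by (apply Rmult_integral_contrapositive; split; [lra | apply HB]).
  destruct (Bset_true_cases x xi HB) as [HU|HXx]; destruct HB as [Hxi _].
  - rewrite !ell_on_U; auto.
  - destruct (ell_chart x HXx) as [y0 [rho [lo [hi [Hrho [_ [_ [_ [_ Hlim]]]]]]]]].
    rewrite (ell_limit_eq _ _ _ _ _ _ (Hlim x xi ltac:(lra) Hxi)),
      (ell_limit_eq _ _ _ _ _ _ (Hlim x (lam * xi) ltac:(lra) Hlxi)),
      sign_pos_mult, Rabs_mult, (Rabs_pos_eq lam); auto; lra.
Qed.

Definition ell_local_model (x0 xi0 : R) : Prop :=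
  exists (V : R -> R -> Prop) (g : R -> R -> R),
    open_2d V /\ V x0 xi0 /\ (forall x xi, V x xi -> ell x xi = g x xi) /\
    smooth_on V g /\ PB X g x0 xi0 = m x0 xi0.

Lemma ell_local_model_U x0 xi0 : xi0 <> 0 -> U x0 -> ell_local_model x0 xi0.
Proof.
  intros Hxi0 Hx0. exists (fun x xi => U x /\ 0 < xi * xi0), k. repeat split.
  - apply open_2d_prod; [exact HUo | apply open_same_sign].
  - exact Hx0.
  - exact (Rsqr_pos_lt _ Hxi0).
  - intros x xi [Hx Hxi]. apply ell_on_U; auto. intros ->; lra.
  - intros n. apply Cn_on_sub with nonzero_xi; auto. intros x xi [_ Hxi] ->. lra.
  - symmetry. apply HmU; auto.
Qed.

Lemma ell_local_model_chart x0 xi0 : xi0 <> 0 -> X x0 <> 0 -> ell_local_model x0 xi0.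
Proof.
  intros Hxi0 Hx0. set (s := sign xi0). assert (Hs : s <> 0) by now apply sign_neq_0.
  destruct (ell_chart x0 Hx0) as [y0 [rho [lo [hi [Hrho [Hy [Hlo [Hhi [HXnz Hlim]]]]]]]]].
  set (Q := fun x => s * ell_profile X k m s y0 x).
  assert (HQ : forall j, Cn_interval j (x0 - rho) (x0 + rho) Q).
  { intros j. apply Cn_interval_mult; [apply Cn_interval_const|].
    apply Cn_interval_subinterval with lo hi; try lra. apply Cn_interval_ell_profile; auto. }
  assert (Hopen : open_2d (fun x xi => x0 - rho < x < x0 + rho /\ 0 < xi * xi0)).
  { apply open_2d_prod; [apply (open_and _ _ (open_gt _) (open_lt _)) | apply open_same_sign]. }
  exists (fun x xi => x0 - rho < x < x0 + rho /\ 0 < xi * xi0), (fun x xi => xi * Q x).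
  split; [exact Hopen|]. split; [split; [lra | exact (Rsqr_pos_lt _ Hxi0)]|]. split; [|split].
  - intros x xi [Hx Hxi]. assert (Hxn : xi <> 0) by (intros ->; lra).
    rewrite (ell_limit_eq _ _ _ _ _ _ (Hlim x xi Hx Hxn)), Rabs_sign, (sign_same xi xi0); auto.
    unfold Q, s. ring.
  - intros n. apply Cn_on_ext with (fun x xi => (1 * xi + 0) * Q x); auto.
    + intros x xi _. ring.
    + apply Cn_on_affine_mul, HQ.
  - pose proof (ell_profile_derive X k m lo hi s y0 x0 HX Hms Hs HXnz Hy ltac:(lra)) as Hd.
    rewrite PB_linear_xi; [|apply ex_derive_scal; eexists; exact Hd].
    unfold Q. rewrite Derive_scal, (is_derive_unique _ _ _ Hd), (pos_homog1_sign m x0 xi0 Hmh Hxi0).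
    fold s. rewrite Rabs_sign. fold s. unfold ell_profile. field. auto.
Qed.

Lemma ell_local_model_Bset x0 xi0 : Bset X true x0 xi0 -> ell_local_model x0 xi0.
Proof.
  intros HB. destruct (Bset_true_cases x0 xi0 HB) as [HU|HXx]; destruct HB as [Hxi _].
  - now apply ell_local_model_U.
  - now apply ell_local_model_chart.
Qed.

Lemma ell_smooth : smooth_on (Bset X true) ell.
Proof.
  intros n. apply Cn_on_local. intros x0 xi0 HB.
  destruct (ell_local_model_Bset x0 xi0 HB) as [V [g [HV [HV0 [Heq [Hg _]]]]]].
  exists V. split; auto. apply Cn_on_ext with g; auto. intros x xi H. symmetry. auto.
Qed.

Lemma ell_PB_lower_bound x0 xi0 : Bset X true x0 xi0 -> PB X ell x0 xi0 >= delta / 2 * Rabs xi0.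
Proof.
  intros HB. destruct (ell_local_model_Bset x0 xi0 HB) as [V [g [HV [HV0 [Heq [_ HPB]]]]]].
  rewrite (PB_ext_loc X _ g), HPB; [apply Hmpos, HB|].
  apply locally_2d_impl with V; auto. apply locally_2d_forall. auto.
Qed.

Lemma ell_forward :
  exists ell : R -> R -> R,
    (forall x xi, Bset X true x xi -> is_lim (ell_approx k m Phi (x, xi)) (limpt true) (ell x xi)) /\
    smooth_on (Bset X true) ell /\
    (forall x xi lam, 0 < lam -> Bset X true x xi -> ell x (lam * xi) = lam * ell x xi) /\
    (forall x xi, xi <> 0 -> Kset X true x -> ell x xi = k x xi) /\
    (forall x xi, Bset X true x xi -> PB X ell x xi >= delta / 2 * Rabs xi).
Proof.
  exists ell. split; [|split; [|split; [|split]]].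
  - exact ell_is_lim.
  - exact ell_smooth.
  - intros. now apply ell_pos_homog.
  - intros x xi Hxi HK. apply ell_on_U; auto.
  - exact ell_PB_lower_bound.
Qed.

End ForwardLimit.

(** * Time reversal *)

Lemma smooth1_opp X : smooth1 X -> smooth1 (fun x => - X x).
Proof. intros H n x. apply ex_derive_n_opp, H. Qed.

Lemma Kset_opp X b x : Kset (fun x => - X x) b x <-> Kset X (negb b) x.
Proof. unfold Kset. rewrite Derive_opp. destruct b; simpl; split; intros [H1 H2]; split; lra. Qed.

Lemma is_ham_flow_reverse X Phi :
  is_ham_flow X Phi -> is_ham_flow (fun x => - X x) (fun t z => Phi (- t) z).
Proof.
  intros [H0 Hd].
  assert (Hopp : forall t, is_derive Ropp t (-1)) by (intros; auto_derive; auto; ring).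
  split.
  - intros z. now rewrite Ropp_0.
  - intros z t. destruct (Hd z (- t)) as [Hx Hp]. split.
    + eapply is_derive_eq; [exact (is_derive_Rcomp (fun s => fst (Phi s z)) Ropp t _ _ Hx (Hopp t))|].
      ring.
    + eapply is_derive_eq; [exact (is_derive_Rcomp (fun s => snd (Phi s z)) Ropp t _ _ Hp (Hopp t))|].
      rewrite Derive_opp. ring.
Qed.

Lemma PB_opp_l X f x xi : PB (fun x => - X x) f x xi = - PB X f x xi.
Proof. unfold PB. rewrite Derive_opp. ring. Qed.

Lemma PB_opp_r X f x xi : PB X (fun x xi => - f x xi) x xi = - PB X f x xi.
Proof.
  unfold PB, dx, dxi. cbv beta. rewrite !Derive_opp.
  change (Derive (f x) xi) with (Derive (fun e => f x e) xi). ring.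
Qed.

Lemma pos_homog1_opp f : pos_homog1 f -> pos_homog1 (fun x xi => - f x xi).
Proof. intros H x xi lam Hl Hxi. rewrite H; auto. ring. Qed.

Lemma ell_approx_reverse X Phi k m z t : smooth1 X -> is_ham_flow X Phi ->
  smooth_on nonzero_xi m -> pos_homog1 m -> snd z <> 0 ->
  ell_approx (fun x xi => - k x xi) m (fun t z => Phi (- t) z) z t = - ell_approx k m Phi z (- t).
Proof.
  intros HX HP Hms Hmh Hz. unfold ell_approx.
  set (f := fun s => m (fst (Phi s z)) (snd (Phi s z))).
  assert (Hf : forall s, continuous f s) by (intros; apply (flow_homog_continuous X Phi); auto).
  assert (Hg : forall s, continuous (fun s => f (- s)) s).
  { intros s. apply (continuous_comp Ropp f); auto.
    apply (is_derive_continuous Ropp s (-1)). auto_derive; auto; ring. }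
  assert (HI : RInt (fun s => f (- s)) 0 t = - RInt f 0 (- t)).
  { assert (Hd : forall u, is_derive (fun t => RInt (fun s => f (- s)) 0 t + RInt f 0 (- t)) u 0).
    { intros u. eapply is_derive_eq.
      - apply is_derive_Rplus; [apply is_derive_RInt_0; auto|].
        apply (is_derive_Rcomp (fun v => RInt f 0 v) Ropp); [apply is_derive_RInt_0; auto|].
        auto_derive; auto.
      - ring. }
    pose proof (derive_zero_const _ Hd t) as Hc. simpl in Hc.
    rewrite Ropp_0, !RInt_point in Hc. unfold zero in Hc. simpl in Hc. lra. }
  change (RInt (fun s => m (fst (Phi (- s) z)) (snd (Phi (- s) z))) 0 t)
    with (RInt (fun s => f (- s)) 0 t).
  change (RInt (fun s => m (fst (Phi s z)) (snd (Phi s z))) 0 (- t)) with (RInt f 0 (- t)).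
  rewrite HI. ring.
Qed.

Lemma is_lim_reverse (f g : R -> R) (l : R) :
  is_lim f p_infty l -> (forall s, g s = - f (- s)) -> is_lim g m_infty (- l).
Proof.
  intros Hf Hg. apply is_lim_ext with (fun s => - f (- s)); [intros; now rewrite Hg|].
  apply (is_lim_opp _ m_infty l).
  apply (is_lim_comp f Ropp m_infty l p_infty); auto.
  - apply (is_lim_opp (fun y => y) m_infty m_infty (is_lim_id m_infty)).
  - exists 0. intros y _. discriminate.
Qed.

(* Reversing time exchanges [K^+] and [K^-] and keeps [m], so [ell_forward] applies to
   [-X] and [-k]. *)
Lemma ell_backward X Phi Utm delta k m :
  smooth1 X -> (forall y, (exists z, y < z /\ X z = 0) /\ (exists z, z < y /\ X z = 0)) ->
  (forall x, X x = 0 -> Derive X x <> 0) -> is_ham_flow X Phi -> open Utm ->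
  (forall x, Kset X false x -> Utm x) ->
  (forall t x xi, t <= 0 -> Utm x -> Utm (fst (Phi t (x, xi)))) ->
  smooth_on nonzero_xi k -> pos_homog1 k -> smooth_on nonzero_xi m -> pos_homog1 m ->
  (forall x xi, xi <> 0 -> Utm x -> m x xi = PB X k x xi) ->
  (forall x xi, xi <> 0 -> m x xi >= delta / 2 * Rabs xi) ->
  exists ell : R -> R -> R,
    (forall x xi, Bset X false x xi -> is_lim (ell_approx k m Phi (x, xi)) (limpt false) (ell x xi)) /\
    smooth_on (Bset X false) ell /\
    (forall x xi lam, 0 < lam -> Bset X false x xi -> ell x (lam * xi) = lam * ell x xi) /\
    (forall x xi, xi <> 0 -> Kset X false x -> ell x xi = k x xi) /\
    (forall x xi, Bset X false x xi -> PB X ell x xi >= delta / 2 * Rabs xi).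
Proof.
  intros HX HXzeros HXnd HPhi HUo HUK HUinv Hks Hkh Hms Hmh HmU Hmpos.
  destruct (ell_forward (fun x => - X x) (fun t z => Phi (- t) z) Utm delta (fun x xi => - k x xi) m)
    as [ell [Hlim [Hsm [Hhom [HK HPB]]]]].
  - now apply smooth1_opp.
  - apply is_ham_flow_reverse, HPhi.
  - intros y. destruct (HXzeros y) as [[z1 [H1 H1']] [z2 [H2 H2']]].
    split; [exists z1 | exists z2]; split; auto; lra.
  - intros x Hx. rewrite Derive_opp. intros Hd. apply (HXnd x); lra.
  - exact HUo.
  - intros x Hx. apply HUK. exact (proj1 (Kset_opp X true x) Hx).
  - intros t x xi Ht Hx. apply HUinv; auto. lra.
  - intros n. apply Cn_on_opp, Hks.
  - now apply pos_homog1_opp.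
  - exact Hms.
  - exact Hmh.
  - intros x xi Hxi Hx. rewrite PB_opp_l, PB_opp_r, Ropp_involutive. auto.
  - exact Hmpos.
  - assert (HB : forall x xi, Bset X false x xi -> Bset (fun x => - X x) true x xi).
    { intros x xi [Hxi HKx]. split; auto.
      intros HK'. apply HKx. exact (proj1 (Kset_opp X false x) HK'). }
    exists (fun x xi => - ell x xi). split; [|split; [|split; [|split]]].
    + intros x xi HBx. apply (is_lim_reverse _ _ _ (Hlim x xi (HB x xi HBx))).
      intros s. rewrite (ell_approx_reverse X Phi k m), !Ropp_involutive; auto. apply HBx.
    + intros n. apply Cn_on_sub with (Bset (fun x => - X x) true); auto. apply Cn_on_opp, Hsm.
    + intros x xi lam Hl HBx. rewrite Hhom; auto. ring.
    + intros x xi Hxi HKx. rewrite HK; auto. ring. exact (proj2 (Kset_opp X true x) HKx).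
    + intros x xi HBx. rewrite PB_opp_r, <- PB_opp_l. auto.
Qed.

Theorem mainTheorem14
  (X : R -> R) (Phi : R -> R * R -> R * R)
  (Utp Utm : R -> Prop) (delta : R) (k m : R -> R -> R)
  (HXs : smooth1 X) (HXp : periodic1 X)
  (HXz : exists x, X x = 0)
  (HXnd : forall x, X x = 0 -> Derive X x <> 0)
  (HPhi : is_ham_flow X Phi)
  (HUp_open : open Utp) (HUm_open : open Utm)
  (HUp_per : forall x, Utp (x + 2 * PI) <-> Utp x)
  (HUm_per : forall x, Utm (x + 2 * PI) <-> Utm x)
  (HUp_nbhd : forall x, Kset X true x -> Utp x)
  (HUm_nbhd : forall x, Kset X false x -> Utm x)
  (HUp_inv : forall t x xi, 0 <= t -> Utp x -> Utp (fst (Phi t (x, xi))))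
  (HUm_inv : forall t x xi, t <= 0 -> Utm x -> Utm (fst (Phi t (x, xi))))
  (Hdelta : 0 < delta)
  (Hks : smooth_on nonzero_xi k) (Hkp : periodic2 k) (Hkh : pos_homog1 k)
  (Hms : smooth_on nonzero_xi m) (Hmp : periodic2 m) (Hmh : pos_homog1 m)
  (HkG : forall (b : bool) x xi, xi <> 0 -> Kset X b x -> k x xi = sgn b * Rabs xi)
  (HkU : forall x xi, xi <> 0 -> (Utp x \/ Utm x) -> PB X k x xi >= delta * Rabs xi)
  (HmU : forall x xi, xi <> 0 -> (Utp x \/ Utm x) -> m x xi = PB X k x xi)
  (Hmpos : forall x xi, xi <> 0 -> m x xi >= delta / 2 * Rabs xi) :
  forall b : bool,
    exists ell : R -> R -> R,
      (forall x xi, Bset X b x xi ->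
         is_lim (ell_approx k m Phi (x, xi)) (limpt b) (ell x xi)) /\
      smooth_on (Bset X b) ell /\
      (forall x xi lam, 0 < lam -> Bset X b x xi -> ell x (lam * xi) = lam * ell x xi) /\
      (forall x xi, xi <> 0 -> Kset X b x -> ell x xi = k x xi) /\
      (forall x xi, Bset X b x xi -> PB X ell x xi >= delta / 2 * Rabs xi).
Proof.
  destruct HXz as [x0 Hx0].
  pose proof (periodic1_zeros_unbounded X x0 HXp Hx0) as HXzeros.
  intros [|].
  - apply (ell_forward X Phi Utp delta k m); auto.
  - apply (ell_backward X Phi Utm delta k m); auto.
Qed.
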